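(* Let $n>1$ be a natural number which is either multiplicatively $e$-perfect (i.e. $T_e(n)=n^2$) or multiplicatively $e$-superperfect (i.e. $T_e(T_e(n))=n^2$). Such an $n$ is a prime power; write $n=p^a$ with $p$ prime and $a\ge 1$. Then $n$ is $e$-harmonic of type $1$ if and only if $\frac{\sigma_e(n)}{p}$ divides $d_e(n)$.
   Context: For $n=p_1^{a_1}\cdots p_r^{a_r}>1$ (prime factorization), a divisor $d=p_1^{b_1}\cdots p_r^{b_r}$ of $n$ is an exponential divisor ($e$-divisor) if $b_i\mid a_i$ for all $i$ (in particular $b_i\ge 1$). $\sigma_e(n)$ is the sum of the $e$-divisors of $n$, $d_e(n)=d(a_1)\cdots d(a_r)$ is the number of $e$-divisors of $n$ (where $d(m)$ is the number of positive divisors of $m$), and $T_e(n)$ is the product of the $e$-divisors of $n$. An integer $n$ is called $e$-harmonic of type $1$ if $\sigma_e(n)\mid n\,d_e(n)$. It is known (Sándor) that $n>1$ is multiplicatively $e$-perfect iff $n=p^a$ with $p$ prime and $a$ an ordinary perfect number, and multiplicatively $e$-superperfect iff $n=p^a$ with $p$ prime and $\sigma(\sigma(a))=2a$. *)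

From mathcomp Require Import all_boot.
Set Implicit Arguments. Unset Strict Implicit. Unset Printing Implicit Defensive.

Definition is_ediv (n d : nat) : bool :=
  (d %| n) &&
  all (fun p => (0 < logn p d) && (logn p d %| logn p n)) (primes n).

Definition edivisors (n : nat) : seq nat := [seq d <- divisors n | is_ediv n d].

Definition sigma_e (n : nat) : nat := \sum_(d <- edivisors n) d.

Definition d_e (n : nat) : nat := \prod_(p <- primes n) size (divisors (logn p n)).

Definition T_e (n : nat) : nat := \prod_(d <- edivisors n) d.

Definition e_harmonic1 (n : nat) : bool := sigma_e n %| n * d_e n.

(* The e-divisors of p^a are the p^b with 0 < b | a. Exactly one of them, p
   itself, is not divisible by p^2. *)
From mathcomp Require Import all_boot zify.

Section PrimePower.

Variables p a : nat.
Hypothesis p_prime : prime p.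
Hypothesis a_gt0 : 0 < a.

Let p_gt0 : 0 < p := prime_gt0 p_prime.

Lemma primes_prime_power : primes (p ^ a) = [:: p].
Proof. by rewrite primesX // primes_prime. Qed.

Lemma is_ediv_prime_power d :
  is_ediv (p ^ a) d -> exists2 b, 0 < b & d = p ^ b.
Proof.
case/andP=> /(dvdn_pfactor _ _ p_prime)[b _ ->].
rewrite primes_prime_power /= andbT pfactorK // => /andP[b_gt0 _].
by exists b.
Qed.

Lemma is_ediv_prime : is_ediv (p ^ a) p.
Proof.
rewrite /is_ediv -{1}(expn1 p) dvdn_exp2l // primes_prime_power /=.
by rewrite logn_prime // eqxx dvd1n.
Qed.

Lemma sigma_e_prime_power : exists m, sigma_e (p ^ a) = p * (1 + p * m).
Proof.
have p_ediv : p \in edivisors (p ^ a).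
  rewrite mem_filter is_ediv_prime -dvdn_divisors ?expn_gt0 ?p_gt0 //.
  by rewrite -{1}(expn1 p) dvdn_exp2l.
rewrite /sigma_e (bigD1_seq p) //=; last exact/filter_uniq/divisors_uniq.
have : p ^ 2 %| \sum_(d <- edivisors (p ^ a) | d != p) d.
  rewrite big_filter_cond; apply: dvdn_sum => d /andP[/is_ediv_prime_power].
  case=> -[|[|b]] // _ ->; first by rewrite expn1 eqxx.
  by rewrite dvdn_exp2l.
case/dvdnP=> m ->; exists m; nia.
Qed.

End PrimePower.

Lemma dvdn_pmul_pfactor p a k x :
  0 < p -> 0 < a -> coprime k p -> (p * k %| p ^ a * x) = (k %| x).
Proof.
move=> p_gt0 a_gt0 cokp.
rewrite -(prednK a_gt0) expnS -mulnA dvdn_pmul2l //.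
by rewrite Gauss_dvdr // coprimeXr.
Qed.

Theorem mainTheorem1 (n p a : nat) :
  1 < n ->
  (T_e n = n ^ 2 \/ T_e (T_e n) = n ^ 2) ->
  prime p -> 0 < a -> n = p ^ a ->
  (e_harmonic1 n <-> (sigma_e n %/ p %| d_e n)).
Proof.
move=> _ _ p_prime a_gt0 ->.
have p_gt0 := prime_gt0 p_prime.
have [m sigma_eq] := sigma_e_prime_power p a p_prime a_gt0.
have co_p : coprime (1 + p * m) p.
  by rewrite /coprime addnC gcdnC mulnC gcdnMDl gcdn1.
by rewrite /e_harmonic1 sigma_eq mulKn // dvdn_pmul_pfactor.
Qed.
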